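(* If $X$ is a regular set star Menger space, then every closed discrete subspace of $X$ has cardinality less than $\mathfrak c$. Hence $e(X)\leq\mathfrak c$.
   Context: For a family $\mathcal U$ of subsets of $X$ and $A\subseteq X$, $st(A,\mathcal U)=\bigcup\{U\in\mathcal U: U\cap A\neq\emptyset\}$. A space $X$ is set star Menger if for every nonempty $A\subseteq X$ and every sequence $(\mathcal U_n:n\in\omega)$ of families of open subsets of $X$ with $\overline A\subseteq\bigcup\mathcal U_n$ for all $n$, there are finite $\mathcal V_n\subseteq\mathcal U_n$ ($n\in\omega$) with $A\subseteq\bigcup_{n}st(\bigcup\mathcal V_n,\mathcal U_n)$. The extent $e(X)$ is the supremum of cardinalities of closed discrete subsets of $X$; $\mathfrak c=2^{\aleph_0}$. *)

From mathcomp Require Import all_boot all_order all_algebra.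
From mathcomp Require Import all_classical all_reals all_analysis.
Set Implicit Arguments. Unset Strict Implicit. Unset Printing Implicit Defensive.
Local Open Scope classical_set_scope.

Definition st {T : Type} (A : set T) (U : set (set T)) : set T :=
  \bigcup_(W in [set W | U W /\ W `&` A !=set0]) W.

Definition set_star_Menger (T : topologicalType) : Prop :=
  forall (A : set T) (U : nat -> set (set T)),
    A !=set0 ->
    (forall n W, U n W -> open W) ->
    (forall n, closure A `<=` \bigcup_(W in U n) W) ->
    exists V : nat -> set (set T),
      (forall n, V n `<=` U n /\ finite_set (V n)) /\
      A `<=` \bigcup_n st (\bigcup_(W in V n) W) (U n).

Definition closed_discrete (T : topologicalType) (D : set T) : Prop :=
  closed D /\
  forall x, D x -> exists W : set T, open W /\ W `&` D = [set x].

(* Suppose x : (nat -> bool) -> D were injective, D closed discrete.  By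
   regularity every x p has an open neighbourhood O p whose closure contains
   no other x q.  A point p of the Cantor space also codes, for every n, a
   finite set decode p n of points; the n-th cover consists of the sets O p
   minus the closure of the union of the O a, a in decode p n (whenever this
   still contains x p).  Set star Mengerness picks finite subfamilies E n of
   these covers, and a diagonal code b with decode b n = E n and b not in E n
   yields a point x b outside every star, since the n-th member at b is
   disjoint from all members chosen at level n.  Hence c does not inject into
   D, and comparability of cardinals gives |D| < c. *)

From mathcomp Require Import all_boot all_order all_algebra.
From mathcomp Require Import all_classical all_reals all_analysis.
Set Implicit Arguments. Unset Strict Implicit. Unset Printing Implicit Defensive.
Local Open Scope classical_set_scope.
Local Open Scope card_scope.

Definition bits_proj (b : nat -> bool) (k : nat) : nat -> bool :=
  fun j => b (pickle (k, j)).

Definition bits_pack (S : nat -> nat -> bool) : nat -> bool :=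
  fun m => if (unpickle m : option (nat * nat)) is Some (k, j) then S k j
            else false.

Lemma bits_packK S k : bits_proj (bits_pack S) k = S k.
Proof. by apply: funext => j; rewrite /bits_proj /bits_pack pickleK. Qed.

(* Component [0] of [b] flags which indices [(n, i)] are in use, component
   [(pickle (n, i)).+2] is the [i]-th member of the [n]-th decoded set. *)
Definition decode (b : nat -> bool) (n : nat) : set (nat -> bool) :=
  [set bits_proj b (pickle (n, i)).+2
     | i in [set i : nat | bits_proj b 0 (pickle (n, i))]].

Lemma diagonal_code (E : nat -> set (nat -> bool)) :
  (forall n, finite_set (E n)) ->
  exists b, forall n, decode b n = E n /\ ~ E n b.
Proof.
move=> finE.
have [s Es] := choice (fun n => iffLR (finite_seqP (E n)) (finE n)).
pose e n i := nth (fun=> false) (s n) i.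
pose S k : nat -> bool := match k with
  | 0 => fun m => if (unpickle m : option (nat * nat)) is Some (n, i)
                  then (i < size (s n))%N else false
  | 1 => fun m => if (unpickle m : option (nat * nat)) is Some (n, i)
                  then ~~ bits_proj (e n i) 1 m else false
  | k.+2 => if (unpickle k : option (nat * nat)) is Some (n, i) then e n i
            else fun=> false
  end.
exists (bits_pack S) => n; rewrite Es; split.
  apply/seteqP; split => a.
    by move=> [i]; rewrite /= !bits_packK /= pickleK => ? <-; exact: mem_nth.
  move=> /= sa; exists (index a (s n)); rewrite /= !bits_packK /= pickleK.
    by rewrite index_mem.
  by rewrite /e nth_index.
move=> /= bs; pose i := index (bits_pack S) (s n).
have : bits_proj (bits_pack S) 1 (pickle (n, i)) =
    ~~ bits_proj (e n i) 1 (pickle (n, i)) by rewrite bits_packK /= pickleK.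
by rewrite /e nth_index //; case: (bits_proj _ _ _).
Qed.

Section CardinalComparability.
Variables (T U : Type).

Definition partial_bij (A : set T) (B : set U) (R : set (T * U)) :=
  [/\ R `<=` A `*` B,
      forall x y y', R (x, y) -> R (x, y') -> y = y' &
      forall x x' y, R (x, y) -> R (x', y) -> x = x'].

Lemma partial_bij_card_le A B R :
  partial_bij A B R -> A `<=` fst @` R -> A #<= B.
Proof.
move=> [RAB Rfun Rinj] AR.
have [->|/set0P [x0 Ax0]] := eqVneq A set0; first exact: card_ge0.
have [[_ y0] _ _] := AR x0 Ax0.
have /choice [f Rf] : forall x, exists y, A x -> R (x, y).
  move=> x; have [Ax|nAx] := pselect (A x); last by exists y0.
  by have [[x' y] Rxy /= <-] := AR x Ax; exists y => _.
have : $|{injfun A >-> B}|.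
  apply/injfunPex; exists f => [x Ax|x x' /set_mem Ax /set_mem Ax' fxx'].
    exact: (RAB _ (Rf x Ax)).2.
  by apply: (Rinj _ _ (f x) (Rf x Ax)); rewrite fxx'; exact: Rf.
by case=> g; exact: inj_card_le.
Qed.

End CardinalComparability.

Lemma partial_bij_transpose T U (A : set T) (B : set U) R :
  partial_bij A B R -> partial_bij B A R^-1%relation.
Proof.
move=> [RAB Rfun Rinj].
by split=> [[y x] /RAB [] //|y x x'|y y' x]; [exact: Rinj|exact: Rfun].
Qed.

Lemma exists_maximal_partial_bij T U (A : set T) (B : set U) :
  exists R, partial_bij A B R /\ (A `<=` fst @` R \/ B `<=` snd @` R).
Proof.
have [R [[RAB Rfun Rinj] maxR]] : exists R, partial_bij A B R /\
    forall R', R `<` R' -> ~ partial_bij A B R'.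
  apply: Zorn_bigcup => F FP Ftot; split.
  - by move=> p [R FR Rp]; have [+ _ _] := FP _ FR; apply.
  - move=> x y y' [R1 F1 h1] [R2 F2 h2].
    have [s12|s21] := Ftot _ _ F1 F2.
      by have [_ fun2 _] := FP _ F2; exact: fun2 (s12 _ h1) h2.
    by have [_ fun1 _] := FP _ F1; exact: fun1 h1 (s21 _ h2).
  - move=> x x' y [R1 F1 h1] [R2 F2 h2].
    have [s12|s21] := Ftot _ _ F1 F2.
      by have [_ _ inj2] := FP _ F2; exact: inj2 (s12 _ h1) h2.
    by have [_ _ inj1] := FP _ F1; exact: inj1 h1 (s21 _ h2).
exists R; split => //; apply: contrapT => /not_orP [].
move=> /nonsubset [x0 [Ax0 Rx0]] /nonsubset [y0 [By0 Ry0]].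
have x_neq_x0 x y : R (x, y) -> x <> x0.
  by move=> Rxy xx0; apply: Rx0; exists (x, y).
have y_neq_y0 x y : R (x, y) -> y <> y0.
  by move=> Rxy yy0; apply: Ry0; exists (x, y).
apply: (maxR (R `|` [set (x0, y0)])).
  split; first exact: subsetUl.
  by move=> RR0; apply: Rx0; exists (x0, y0) => //; apply: RR0; right.
have R0P x y : (R `|` [set (x0, y0)]) (x, y) -> R (x, y) \/ x = x0 /\ y = y0.
  by case=> [|[-> ->]]; [left|right].
split=> [[x y] /R0P [/RAB //|[-> ->]]
        |x y y' /R0P [h|[xx0 yy0]] /R0P [h'|[xx0' yy0']]
        |x x' y /R0P [h|[xx0 yy0]] /R0P [h'|[xx0' yy0']]].
- by [].
- exact: Rfun h h'.
- by case: (x_neq_x0 _ _ h xx0').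
- by case: (x_neq_x0 _ _ h' xx0).
- by rewrite yy0 yy0'.
- exact: Rinj h h'.
- by case: (y_neq_y0 _ _ h yy0').
- by case: (y_neq_y0 _ _ h' yy0).
- by rewrite xx0 xx0'.
Qed.

Lemma card_le_total T U (A : set T) (B : set U) : A #<= B \/ B #<= A.
Proof.
have [R [RAB [AR|BR]]] := exists_maximal_partial_bij A B.
  by left; exact: partial_bij_card_le RAB AR.
right; apply: partial_bij_card_le (partial_bij_transpose RAB) _.
by move=> y /BR [[x y'] Rxy /= <-]; exists (y', x).
Qed.

Lemma closure_bigcup_finite (T : topologicalType) (I : choiceType) (A : set I)
    (F : I -> set T) : finite_set A ->
  closure (\bigcup_(i in A) F i) = \bigcup_(i in A) closure (F i).
Proof.
move=> finA; apply/seteqP; split; last first.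
  by move=> t [i Ai]; apply: closureS; exact: bigcup_sup.
have clF : closed (\bigcup_(i in A) closure (F i)).
  by apply: closed_bigcup => // i _; exact: closed_closure.
rewrite [X in _ `<=` X](closure_id _).1 //; apply: closureS.
by move=> t [i Ai Fit]; exists i => //; exact: subset_closure.
Qed.

Section SeparatedCantorFamily.
Variables (T : topologicalType) (x : (nat -> bool) -> T).
Variable O : (nat -> bool) -> set T.
Hypotheses (closed_range_x : closed (range x)) (open_O : forall p, open (O p)).
Hypotheses (O_x : forall p, O p (x p))
  (closure_O_x : forall p q, closure (O p) (x q) -> q = p).

Let coded_union n p := \bigcup_(a in decode p n) O a.

Definition shrunk_nbhd n p :=
  if `[< closure (coded_union n p) (x p) >] then O p
  else O p `\` closure (coded_union n p).

Lemma open_shrunk_nbhd n p : open (shrunk_nbhd n p).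
Proof.
rewrite /shrunk_nbhd; case: ifPn => _ //.
by apply: openI => //; rewrite openC; exact: closed_closure.
Qed.

Lemma shrunk_nbhd_x n p : shrunk_nbhd n p (x p).
Proof. by rewrite /shrunk_nbhd; case: ifPn => // /asboolPn; split. Qed.

Lemma shrunk_nbhd_sub n p : shrunk_nbhd n p `<=` O p.
Proof. by rewrite /shrunk_nbhd; case: ifPn => _ t // []. Qed.

Lemma O_x_eq p q : O p (x q) -> q = p.
Proof. by move=> Opq; apply: closure_O_x; exact: subset_closure. Qed.

Lemma shrunk_nbhd_inj n : injective (shrunk_nbhd n).
Proof.
move=> p q Wpq; apply: O_x_eq; apply: (@shrunk_nbhd_sub n).
by rewrite -Wpq; exact: shrunk_nbhd_x.
Qed.

Lemma closure_coded_union_x n p :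
  finite_set (decode p n) -> ~ decode p n p ->
  ~ closure (coded_union n p) (x p).
Proof.
move=> fin_dec ndec; rewrite /coded_union closure_bigcup_finite //.
move=> -[a deca /closure_O_x ap].
by apply: ndec; move: deca; rewrite -ap.
Qed.

Lemma shrunk_nbhd_disjoint n p a : ~ closure (coded_union n p) (x p) ->
  decode p n a -> shrunk_nbhd n p `&` shrunk_nbhd n a = set0.
Proof.
move=> /asboolPn ncl deca; apply/seteqP; split => // t [].
rewrite /shrunk_nbhd (negbTE ncl) => -[_ ncl_t] /shrunk_nbhd_sub Oat.
by apply: ncl_t; apply: subset_closure; exists a.
Qed.

Lemma separated_cantor_family_not_set_star_Menger : ~ set_star_Menger T.
Proof.
move=> ssm.
have [|n Z [p _ <-]|n t clt|V [VU Vst]] :=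
  ssm (range x) (fun n => range (shrunk_nbhd n)).
- by exists (x point), point.
- exact: open_shrunk_nbhd.
- have [p _ <-] := closed_range_x clt.
  by exists (shrunk_nbhd n p); [exists p | exact: shrunk_nbhd_x].
have finE n : finite_set (shrunk_nbhd n @^-1` V n).
  by apply: finite_preimage (VU n).2 => p q _ _; exact: shrunk_nbhd_inj.
have [b decb] := diagonal_code finE.
have [n _ [_ [[p _ <-] [t [Wpt [Z VZ Zt]]]] Wpb]] := Vst (x b) (imageT x b).
have /esym pb := O_x_eq (shrunk_nbhd_sub Wpb); subst p.
have [a _ Za] := (VU n).1 Z VZ.
have deca : decode b n a by rewrite (decb n).1 /preimage /= Za.
have ncl : ~ closure (coded_union n b) (x b).
  by apply: closure_coded_union_x; rewrite (decb n).1; [exact: finE|exact: (decb n).2].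
have : (shrunk_nbhd n b `&` shrunk_nbhd n a) t by split; rewrite ?Za.
by rewrite shrunk_nbhd_disjoint.
Qed.

End SeparatedCantorFamily.

Lemma closed_discrete_sub_closed (T : topologicalType) (D S : set T) :
  closed_discrete D -> S `<=` D -> closed S.
Proof.
move=> [cD dD] SD y clSy.
have [W [oW WD]] := dD y (cD y (closureS SD clSy)).
have [Wy _] : (W `&` D) y by rewrite WD.
have [s [Ss Ws]] := clSy W (open_nbhs_nbhs (conj oW Wy)).
have : (W `&` D) s by split => //; exact: SD.
by rewrite WD => <-.
Qed.

Lemma regular_closed_discrete_nbhs (T : topologicalType) (D : set T) t :
  regular_space T -> closed_discrete D -> D t ->
  exists O : set T, [/\ open O, O t & closure O `&` D `<=` [set t]].
Proof.
move=> reg cdD Dt.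
have cl_other : closed (D `\` [set t]).
  by apply: closed_discrete_sub_closed cdD _ => ? [].
have : nbhs t (~` (D `\` [set t])).
  by apply: open_nbhs_nbhs; split; [rewrite openC | move=> [_ /(_ erefl)]].
move=> /reg [M nM clM]; exists M°; split; [exact: open_interior | exact: nM |].
move=> s [/(closureS (@interior_subset _ M)) /clM nDs Ds].
by apply: contrapT => st; exact: nDs.
Qed.

Lemma not_cantor_le_closed_discrete (T : topologicalType) (D : set T) :
  regular_space T -> set_star_Menger T -> closed_discrete D ->
  ~ ([set: nat -> bool] #<= D).
Proof.
move=> reg ssm cdD /card_leP [f].
pose x p : T := \val (f (exist _ p (mem_set (I : [set: nat -> bool] p)))).
have Dx p : D (x p) by exact: set_mem (valP _).
have x_inj : injective x.
  by move=> p q /val_inj /(inj (in_setT _) (in_setT _)) /(congr1 val).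
have /choice [U HU] : forall p, exists U : set T,
    [/\ open U, U (x p) & closure U `&` D `<=` [set x p]].
  by move=> p; exact: regular_closed_discrete_nbhs.
apply: (@separated_cantor_family_not_set_star_Menger T x U) => //.
- by apply: closed_discrete_sub_closed cdD _ => _ [p _ <-].
- by move=> p; have [] := HU p.
- by move=> p; have [] := HU p.
- by move=> p q clq; have [_ _ /(_ (x q) (conj clq (Dx q)))] := HU p => /x_inj.
Qed.

Theorem theorem2p2 (T : topologicalType) :
  regular_space T -> set_star_Menger T ->
  forall D : set T, closed_discrete D ->
    D #<= [set: nat -> bool] /\ ~ ([set: nat -> bool] #<= D).
Proof.
move=> reg ssm D cdD.
have not_c_le_D := not_cantor_le_closed_discrete reg ssm cdD.
split=> //.
by have [//|/not_c_le_D] := card_le_total D [set: nat -> bool].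
Qed.
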